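(* Let $k$ be any field, $A=kQ_A/I_A$ a monomial algebra with vertices $e_1,\dots,e_n$, and $B$ the algebra obtained by gluing the distinct non-isolated vertices $e_1,e_n$. Then $\mathrm{kspp}(1,n)\ge\mathrm{sp}(1,n)$. In particular, the number of special pairs is at least the number of special paths.
   Context: Monomial algebra: $A=kQ_A/I_A$, $Q_A$ finite quiver, $I_A$ admissible, generated by a minimal set $Z_A$ of paths of length $\ge2$; $\mathcal B_A$: paths (including trivial ones) avoiding elements of $Z_A$ as subpaths. Gluing: $B\subseteq A$ generated by $f_1=e_1+e_n$, $f_i=e_i$ ($2\le i\le n-1$) and all arrows; $B\cong kQ_B/I_B$, $Q_B$ obtained by identifying $e_1,e_n$ to $f_1$ (arrow $\alpha\mapsto\alpha^*$, path $p=a_m\cdots a_1\mapsto p^*=a_m^*\cdots a_1^*$, $e_1^*=e_n^*=f_1$), $I_B$ generated by $Z_B=\{r^*:r\in Z_A\}\cup\{b^*c^*: b,c\text{ arrows},\ t(c),s(b)\in\{e_1,e_n\},\ t(c)\ne s(b)\}$; $\mathcal B_B$ its basis paths. For path sets $X,Y$, $k(X\|Y)$ has basis the pairs $x\|y$ of parallel paths. For monomial $\Lambda=kQ/\langle Z\rangle$ with basis paths $\mathcal B$: $\delta^0(e\|\gamma)=\sum_{a\in Q_1,s(a)=e,a\gamma\in\mathcal B}a\|a\gamma-\sum_{a\in Q_1,t(a)=e,\gamma a\in\mathcal B}a\|\gamma a$; $\delta^1(a\|\gamma)=\sum_{r\in Z}r\|r^{a\|\gamma}$, where $r^{a\|\gamma}$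 is the sum over occurrences of $a$ in $r$ of the path obtained by replacing that occurrence by $\gamma$, keeping only paths in $\mathcal B$; subscripts $A,B$ indicate the algebra. A special path is a $p\in\mathcal B_A$ from $e_1$ to $e_n$ or from $e_n$ to $e_1$ with $\delta^0_B(f_1\|p^* )\ne0$ (equivalently $ap\notin I_A$ or $pa\notin I_A$ for some arrow $a$); $\mathrm{sp}(1,n)$ is their number. A special pair is $(\alpha,p)$, $\alpha$ an arrow starting or ending at $e_1$ or $e_n$, $p\in\mathcal B_A$, $\alpha^*$ parallel to $p^*$ in $Q_B$ but $\alpha$ not parallel to $p$ in $Q_A$. $Z_{spp}$ is the intersection of $\mathrm{Ker}\,\delta^1_B$ with the span of the $\alpha^*\|p^*$ over special pairs, and $\mathrm{kspp}(1,n)=\dim_kZ_{spp}$. *)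

From mathcomp Require Import all_boot all_algebra.
Set Implicit Arguments. Unset Strict Implicit. Unset Printing Implicit Defensive.
Import GRing.Theory.
Local Open Scope ring_scope.

(* A path is a pair (start vertex, list of arrows in traversal order):
   p = a_m ... a_1 is represented as (s a_1, [:: a_1; ...; a_m]); trivial path
   e_v is (v, [::]). *)
Section Paths.
Variables (V E : finType) (sf tf : E -> V).

Fixpoint walk (v : V) (l : seq E) : bool :=
  if l is a :: l' then (sf a == v) && walk (tf a) l' else true.

Definition pend (p : V * seq E) : V := last p.1 (map tf p.2).

Definition parallel (a : E) (p : V * seq E) : bool :=
  (sf a == p.1) && (tf a == pend p).

Definition ppar (p q : V * seq E) : bool := (p.1 == q.1) && (pend p == pend q).

Definition avoids (Z : seq (seq E)) (l : seq E) : bool := ~~ has (fun r => infix r l) Z.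

Fixpoint words (m : nat) : seq (seq E) :=
  if m is m'.+1 then [seq a :: w | a <- enum E, w <- words m'] else [:: [::]].

Definition words_below (N : nat) : seq (seq E) := flatten [seq words m | m <- iota 0 N].

(* basis paths: paths (starting at a vertex of verts) avoiding Z, of length < N.
   Under the admissibility hypothesis with bound N this is exactly the set of
   all paths avoiding Z. *)
Definition basis_paths (verts : seq V) (Z : seq (seq E)) (N : nat) : seq (V * seq E) :=
  [seq p <- [seq (v, l) | v <- verts, l <- words_below N] | walk p.1 p.2 && avoids Z p.2].
End Paths.

Section Gluing.
Variables (k : fieldType) (n : nat) (E : finType) (s t : E -> 'I_n.+2)
          (Z : seq (seq E)) (N : nat).

Definition e1 : 'I_n.+2 := ord0.
Definition en : 'I_n.+2 := ord_max.

(* vertices of Q_B are the vertices of Q_A other than e_n; f_1 is represented by e1 *)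
Definition glue (v : 'I_n.+2) : 'I_n.+2 := if v == en then e1 else v.
Definition sB (a : E) := glue (s a).
Definition tB (a : E) := glue (t a).

Definition vertsA : seq 'I_n.+2 := enum 'I_n.+2.
Definition vertsB : seq 'I_n.+2 := [seq v <- enum 'I_n.+2 | v != en].

Definition glued (v : 'I_n.+2) : bool := (v == e1) || (v == en).

(* Z_B = { r^* : r in Z_A } u { b^* c^* : t(c), s(b) in {e1,en}, t(c) <> s(b) }
   (b^* c^* is the path "c then b") *)
Definition ZB : seq (seq E) :=
  undup (Z ++ [seq [:: c; b] | c <- enum E,
                 b <- [seq b <- enum E | glued (t c) && glued (s b) && (t c != s b)]]).

Definition BA := basis_paths s t vertsA Z N.
Definition BB := basis_paths sB tB vertsB ZB N.

Definition star (p : 'I_n.+2 * seq E) : 'I_n.+2 * seq E := (glue p.1, p.2).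

Definition rpathB (r : seq E) : 'I_n.+2 * seq E :=
  (if r is a :: _ then sB a else e1, r).

(* basis of k(Q_1^B || B_B) and of k(Z_B || B_B) *)
Definition C1 : seq (E * ('I_n.+2 * seq E)) :=
  [seq (a, q) | a <- enum E, q <- [seq q <- BB | parallel sB tB a q]].
Definition C2 : seq (seq E * ('I_n.+2 * seq E)) :=
  [seq (r, q) | r <- ZB, q <- [seq q <- BB | ppar tB (rpathB r) q]].

Definition replace (r : seq E) (i : nat) (g : 'I_n.+2 * seq E) : 'I_n.+2 * seq E :=
  ((rpathB r).1, take i r ++ g.2 ++ drop i.+1 r).

(* coefficient of r||q in delta^1_B(a||g): number of occurrences of a in r whose
   replacement by g gives q (only basis paths q are recorded) *)
Definition d1coef (x : E * ('I_n.+2 * seq E)) (y : seq E * ('I_n.+2 * seq E)) : nat :=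
  count (fun i => (nth x.1 y.1 i == x.1) && (replace y.1 i x.2 == y.2)) (iota 0 (size y.1)).

(* delta^1_B as a matrix acting on row vectors in the basis C1, values in basis C2 *)
Definition delta1B : 'M[k]_(size C1, size C2) :=
  \matrix_(i, j) (d1coef (tnth (in_tuple C1) i) (tnth (in_tuple C2) j))%:R.

Definition delta0B (g : 'I_n.+2 * seq E) : 'rV[k]_(size C1) :=
  \row_j (let x := tnth (in_tuple C1) j in
          ((sB x.1 == e1) && (x.2 == (g.1, g.2 ++ [:: x.1])))%:R
        - ((tB x.1 == e1) && (x.2 == (sB x.1, x.1 :: g.2)))%:R).

Definition special_path (p : 'I_n.+2 * seq E) : bool :=
  [&& p \in BA,
      ((p.1 == e1) && (pend t p == en)) || ((p.1 == en) && (pend t p == e1))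
    & delta0B (star p) != 0].

Definition sp : nat := count special_path BA.

Definition special_pair (a : E) (p : 'I_n.+2 * seq E) : bool :=
  [&& glued (s a) || glued (t a), p \in BA,
      parallel sB tB a (star p) & ~~ parallel s t a p].

Definition special_pairs : seq (E * ('I_n.+2 * seq E)) :=
  [seq x <- [seq (a, p) | a <- enum E, p <- BA] | special_pair x.1 x.2].

Definition basis_vec (x : E * ('I_n.+2 * seq E)) : 'rV[k]_(size C1) :=
  \row_j (tnth (in_tuple C1) j == x)%:R.

Definition spp_span : 'M[k]_(size special_pairs, size C1) :=
  \matrix_(i, j) basis_vec (let x := tnth (in_tuple special_pairs) i in (x.1, star x.2)) 0 j.

Definition Zspp := (spp_span :&: kermx delta1B)%MS.

Definition kspp : nat := \rank Zspp.
End Gluing.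

From mathcomp Require Import all_boot all_algebra.
Set Implicit Arguments. Unset Strict Implicit. Unset Printing Implicit Defensive.
Import GRing.Theory.

(* For a special path p let v_p be δ⁰_B applied to f₁‖p*.  It lies in
   Ker δ¹_B because δ⁰_B δ¹_B = 0: in the coefficient of r‖q, inserting p*
   after the i-th arrow of the relation r or before the (i+1)-th one gives the
   same path, so the two sums of δ⁰_B telescope.  Each nonzero coordinate of
   v_p is a‖ap* or a‖p*a; as p runs between e₁ and e_n, ap or pa is then a
   path of A and (a, ap) or (a, pa) is a special pair, so v_p also lies in the
   span of the special pairs.  Two distinct special paths never share such a
   coordinate, since p*a = ap'* would make p a cycle; hence the v_p are
   linearly independent in Z_spp. *)

Lemma allpairs_pair_uniq (A B : eqType) (s : seq A) (f : A -> seq B) :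
  uniq s -> (forall a, uniq (f a)) -> uniq [seq (a, b) | a <- s, b <- f a].
Proof.
elim: s => [|a s IHs] //= /andP[a_s s_uniq] f_uniq.
rewrite cat_uniq IHs // andbT map_inj_uniq ?f_uniq; last by move=> b b' [].
apply/hasPn => -[a' b] /allpairsPdep[a'' [b' [a''s _ [-> _]]]].
by apply/mapP => -[b'' _ [a''a _]]; rewrite -a''a a''s in a_s.
Qed.

Lemma sumn_pred1_uniq (T : eqType) (l : seq T) (x0 : T) (c : nat) :
  uniq l -> \sum_(x <- l) (x == x0) * c = (x0 \in l) * c.
Proof.
elim: l => [|x l IHl] /=; first by rewrite big_nil.
move=> /andP[x_l l_uniq]; rewrite big_cons IHl // in_cons eq_sym.
by case: eqP => [->|] /=; [rewrite (negbTE x_l) addn0 | rewrite add0n].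
Qed.

Lemma sum_nat_shift (F G : nat -> nat) m :
  F 0 = 0 -> G m = 0 -> (forall i, i < m -> F i.+1 = G i) ->
  \sum_(0 <= i < m.+1) F i = \sum_(0 <= i < m.+1) G i.
Proof.
move=> F0 Gm FG; rewrite big_nat_recl // big_nat_recr //= F0 Gm add0n addn0.
by apply: eq_big_nat => i /andP[_ /FG].
Qed.

Lemma row_free_disjoint_supports (F : fieldType) m n (A : 'M[F]_(m, n)) :
  (forall i, row i A != 0)%R ->
  (forall i i' j, i != i' -> A i j != 0 -> A i' j = 0)%R ->
  row_free A.
Proof.
move=> A_nz A_disj; rewrite -kermx_eq0; apply/rowV0P => u /sub_kermxP uA0.
apply/rowP => i; rewrite mxE.
have /existsP[j Aij] : [exists j, A i j != 0%R].
  apply: contraR (A_nz i); rewrite negb_exists => /forallP Ai0.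
  by apply/eqP/rowP => j; rewrite !mxE; apply/eqP/negPn.
move/rowP/(_ j): uA0; rewrite !mxE (bigD1 i) //= big1 ?addr0 => [|i' i'i].
  by move/eqP; rewrite mulf_eq0 (negbTE Aij) orbF => /eqP.
by rewrite (A_disj i) ?mulr0 // eq_sym.
Qed.

Section Walks.
Variables (V E : finType) (sf tf : E -> V).
Local Notation walk := (walk sf tf).

Lemma walk_cat v l1 l2 :
  walk v (l1 ++ l2) = walk v l1 && walk (last v (map tf l1)) l2.
Proof. by elim: l1 v => [|a l IHl] v //=; rewrite IHl andbA. Qed.

Lemma walk_head v a l : walk v (a :: l) -> sf a = v.
Proof. by move=> /= /andP[/eqP]. Qed.

Lemma mem_words m l : (l \in words E m) = (size l == m).
Proof.
elim: m l => [|m IHm] [|a l] //=; first by apply/allpairsPdep => -[? [? []]].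
apply/allpairsPdep/idP => [[a' [l' [_ l'm [_ ->]]]] | lm].
  by rewrite eqSS -IHm.
by exists a, l; rewrite mem_enum IHm.
Qed.

Lemma words_uniq m : uniq (words E m).
Proof.
elim: m => [|m IHm] //=; apply: allpairs_uniq => //; first exact: enum_uniq.
by move=> [a l] [a' l'] _ _ /= [-> ->].
Qed.

Lemma mem_words_below N l : (l \in words_below E N) = (size l < N).
Proof.
apply/flatten_mapP/idP => [[m] | lN]; last by exists (size l); rewrite ?mem_iota ?mem_words.
by rewrite mem_iota mem_words => /andP[_ mN] /eqP ->.
Qed.

Lemma words_below_uniq N : uniq (words_below E N).
Proof.
elim: N => [|N IHN] //.
rewrite /words_below -addn1 iotaD map_cat flatten_cat cat_uniq -/(words_below E N).
rewrite IHN /= cats0 words_uniq andbT /=.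
by apply/hasPn => l; rewrite mem_words add0n => /eqP <-; rewrite mem_words_below ltnn.
Qed.

Lemma mem_basis_paths verts Z N v l :
  ((v, l) \in basis_paths sf tf verts Z N) =
  [&& v \in verts, size l < N, walk v l & avoids Z l].
Proof.
rewrite mem_filter /=; apply/andP/idP => [[wa] | /and4P[vv lN -> ->]].
  move=> /allpairsPdep[v' [l' [vv' + [vv'E ll'E]]]]; rewrite mem_words_below.
  by rewrite vv'E ll'E in wa *; rewrite vv' wa => ->.
by split=> //; apply/allpairsPdep; exists v, l; rewrite mem_words_below.
Qed.

Lemma basis_paths_uniq verts Z N : uniq verts -> uniq (basis_paths sf tf verts Z N).
Proof.
by move=> verts_uniq; apply/filter_uniq/allpairs_pair_uniq => // _; apply: words_below_uniq.
Qed.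

End Walks.

Lemma avoids_infix (E : finType) (Z : seq (seq E)) l l' :
  avoids Z l -> infix l' l -> avoids Z l'.
Proof.
by move=> /hasPn Zl l'l; apply/hasPn => r /Zl; apply: contra => /infix_trans; apply.
Qed.

Section Gluing.
Variables (k : fieldType) (n : nat) (E : finType) (s t : E -> 'I_n.+2)
          (Z : seq (seq E)) (N : nat).

Local Notation e1 := (e1 n).
Local Notation en := (en n).
Local Notation sB := (sB s).
Local Notation tB := (tB t).
Local Notation ZB := (ZB s t Z).
Local Notation BA := (BA s t Z N).
Local Notation BB := (BB s t Z N).
Local Notation C1 := (C1 s t Z N).
Local Notation C2 := (C2 s t Z N).

Lemma glue_neq_en v : glue v != en.
Proof. by rewrite /glue; case: (v =P en) => // /eqP. Qed.

Lemma glue_eq_e1 v : (glue v == e1) = glued v.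
Proof. by rewrite /glue /glued; case: (v =P en) => [->|_]; rewrite ?eqxx ?orbT ?orbF. Qed.

Lemma walk_glue v l : walk s t v l -> walk sB tB (glue v) l.
Proof. by elim: l v => [|a l IHl] v //= /andP[/eqP <- /IHl ->]; rewrite eqxx. Qed.

Lemma mem_BA v l : ((v, l) \in BA) = [&& size l < N, walk s t v l & avoids Z l].
Proof. by rewrite mem_basis_paths mem_enum. Qed.

Lemma mem_BB v l :
  ((v, l) \in BB) = [&& v != en, size l < N, walk sB tB v l & avoids ZB l].
Proof. by rewrite mem_basis_paths mem_filter mem_enum andbT. Qed.

Lemma BA_uniq : uniq BA.
Proof. exact/basis_paths_uniq/enum_uniq. Qed.

Lemma BB_uniq : uniq BB.
Proof. exact/basis_paths_uniq/filter_uniq/enum_uniq. Qed.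

Lemma C1_uniq : uniq C1.
Proof. by apply: allpairs_pair_uniq (enum_uniq _) _ => a; apply/filter_uniq/BB_uniq. Qed.

Lemma mem_C1 a w : ((a, w) \in C1) = (w \in BB) && parallel sB tB a w.
Proof.
apply/allpairsPdep/andP => [[a' [w' [_ + [-> ->]]]] | [wB aw]].
  by rewrite mem_filter => /andP[].
by exists a, w; rewrite mem_enum mem_filter wB aw.
Qed.

Lemma ZB_Z r : r \in Z -> r \in ZB.
Proof. by move=> rZ; rewrite mem_undup mem_cat rZ. Qed.

Lemma ZB_glued_pair c b :
  glued (t c) -> glued (s b) -> t c != s b -> [:: c; b] \in ZB.
Proof.
move=> gc gb cb; rewrite mem_undup mem_cat; apply/orP; right.
by apply/allpairsPdep; exists c, b; rewrite mem_enum mem_filter gc gb cb mem_enum.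
Qed.

Lemma avoids_ZB l : avoids ZB l -> avoids Z l.
Proof. by move=> /hasPn ZBl; apply/hasPn => r /ZB_Z /ZBl. Qed.

Lemma ZB_walk (Z_walk : forall r, r \in Z -> exists v, walk s t v r) r :
  r \in ZB -> exists v, walk sB tB v r.
Proof.
rewrite mem_undup mem_cat => /orP[/Z_walk[v /walk_glue] | ]; first by exists (glue v).
move=> /allpairsPdep[c [b [_ + ->]]]; rewrite mem_filter => /andP[/andP[/andP[gc gb] _] _].
have /eqP tc : glue (t c) == e1 by rewrite glue_eq_e1.
have /eqP sb : glue (s b) == e1 by rewrite glue_eq_e1.
by exists (sB c); rewrite /= /sB /tB tc sb !eqxx.
Qed.

Lemma BB_infix v l u m :
  (v, l) \in BB -> infix m l -> u != en -> walk sB tB u m -> (u, m) \in BB.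
Proof.
rewrite !mem_BB => /and4P[_ lN _ ZBl] ml -> ->.
by rewrite (leq_ltn_trans (size_infix ml)) ?(avoids_infix ZBl).
Qed.

Local Open Scope ring_scope.
Local Notation delta0B := (delta0B k s t Z N).
Local Notation delta1B := (delta1B k s t Z N).
Local Notation c1 j := (tnth (in_tuple C1) j).

(* [d0_rcons g x] and [d0_cons g x] say that [x] is a‖aγ, resp. a‖γa, in the
   formula for δ⁰_B(f₁‖γ) with γ = [g]; paths are listed in traversal order,
   so aγ is [rcons_path g a]. *)
Definition rcons_path (g : 'I_n.+2 * seq E) (a : E) := (g.1, g.2 ++ [:: a]).
Definition cons_path (a : E) (g : 'I_n.+2 * seq E) := (sB a, a :: g.2).
Definition d0_rcons g (x : E * ('I_n.+2 * seq E)) :=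
  (sB x.1 == e1) && (x.2 == rcons_path g x.1).
Definition d0_cons g (x : E * ('I_n.+2 * seq E)) :=
  (tB x.1 == e1) && (x.2 == cons_path x.1 g).

Lemma delta0B_entry g j :
  delta0B g 0 j = (d0_rcons g (c1 j))%:R - (d0_cons g (c1 j))%:R.
Proof. by rewrite mxE. Qed.

Lemma delta0B_support g j :
  delta0B g 0 j != 0 -> d0_rcons g (c1 j) || d0_cons g (c1 j).
Proof.
by rewrite delta0B_entry; apply: contraR => /norP[/negbTE-> /negbTE->]; rewrite subrr.
Qed.

Lemma sum_C1_d1coef a0 (P : pred E) (f : E -> 'I_n.+2 * seq E) y :
  (\sum_(x <- C1) (P x.1 && (x.2 == f x.1)) * d1coef s x y =
   \sum_(0 <= i < size y.1) (let a := nth a0 y.1 i in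
      [&& (a, f a) \in C1, P a & replace s y.1 i (f a) == y.2]))%N.
Proof.
rewrite /index_iota subn0.
under eq_bigr do rewrite /d1coef -sumn_count sumnE big_map big_distrr.
rewrite exchange_big; apply: eq_big_seq => i; rewrite mem_iota => /andP[_ iy] /=.
set a := nth a0 y.1 i.
transitivity (\sum_(x <- C1) (x == (a, f a)) * (P a && (replace s y.1 i (f a) == y.2)))%N.
  apply: eq_bigr => -[b w] _; rewrite /= (set_nth_default a0) // -/a !mulnb xpair_eqE.
  case: (b =P a) => [->|/eqP ba]; last by rewrite (eq_sym a) (negbTE ba) andbF.
  by case: (w =P f a) => [->|_]; rewrite ?eqxx ?andbF //= andbT.
by rewrite sumn_pred1_uniq ?C1_uniq // mulnb.
Qed.

Lemma replace_eq r i w q :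
  (rpathB s r).1 = q.1 -> (replace s r i w == q) = (take i r ++ w.2 ++ drop i.+1 r == q.2).
Proof. by case: q => v l /= <-; rewrite /replace xpair_eqE eqxx. Qed.

Lemma BB_neq_infix_ZB q r l1 l2 : q \in BB -> r \in ZB -> (l1 ++ r ++ l2 == q.2) = false.
Proof.
case: q => v l; rewrite mem_BB => /and4P[_ _ _ /hasPn ZBl] /ZBl rl.
by apply: contraNF rl => /= /eqP <-; rewrite infix_infix.
Qed.

Lemma d0_terms_adjacent g q r0 a b r1 v0 :
  g.1 = e1 -> q \in BB -> walk sB tB v0 (r0 ++ [:: a; b] ++ r1) ->
  [&& (b, rcons_path g b) \in C1, sB b == e1 & r0 ++ a :: g.2 ++ b :: r1 == q.2] =
  [&& (a, cons_path a g) \in C1, tB a == e1 & r0 ++ a :: g.2 ++ b :: r1 == q.2].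
Proof.
move=> g1 qB; rewrite walk_cat => /andP[_] /= /and3P[_ /eqP ab _]; rewrite ab.
case: (tB a =P e1) => [ae1|]; last by rewrite !andbF.
case: q qB => qv ql qB; case: eqP => [/= qlE|]; last by rewrite !andbF.
rewrite !andbT !mem_C1 /parallel /pend /rcons_path /cons_path /= map_cat last_cat /= !eqxx.
have := qB; rewrite mem_BB -qlE => /and4P[_ _ + _].
rewrite walk_cat /= => /andP[_ /andP[_]]; rewrite walk_cat => /andP[walk_g /= /andP[/eqP bg _]].
rewrite -bg ab ae1 g1 eqxx andbT.
have rcons_B : (e1, g.2 ++ [:: b]) \in BB.
  apply: (BB_infix qB) => //; last by rewrite walk_cat -ae1 walk_g /= -bg ab eqxx.
  have -> : ql = (r0 ++ [:: a]) ++ (g.2 ++ [:: b]) ++ r1 by rewrite -qlE -!catA.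
  exact: infix_infix.
have cons_B : (sB a, a :: g.2) \in BB.
  apply: (BB_infix qB); last by rewrite /= eqxx walk_g.
    by rewrite -qlE; exact: (infix_infix r0 (a :: g.2) (b :: r1)).
  exact: glue_neq_en.
by rewrite rcons_B cons_B.
Qed.

(* The end terms of the telescoping sums are γr and rγ, which contain the
   relation r and so are not basis paths. *)
Lemma delta0B_mul_delta1B (Z_walk : forall r, r \in Z -> exists v, walk s t v r) g :
  g.1 = e1 -> delta0B g *m delta1B = 0.
Proof.
move=> g1; apply/rowP => j; rewrite mxE [RHS]mxE.
under eq_bigr do rewrite delta0B_entry mxE mulrBl -!natrM.
rewrite sumrB -!natr_sum; apply/eqP; rewrite subr_eq0; apply/eqP; congr _%:R.
have := mem_tnth j (in_tuple C2); set y := tnth _ j.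
rewrite -(big_tnth _ _ C1 (fun=> true) (fun x => d0_rcons g x * d1coef s x y)%N).
rewrite -(big_tnth _ _ C1 (fun=> true) (fun x => d0_cons g x * d1coef s x y)%N).
clearbody y; case: y => r q /allpairsPdep[r' [q' [rZB + [-> ->]]]] {r q}.
rewrite mem_filter => /andP[/andP[/eqP rq _] qB].
case: r' rZB rq => [|a0 r] rZB rq; first by rewrite !big1 // => x _; rewrite muln0.
have r'm : size (a0 :: r) = (size r).+1 by [].
move: (a0 :: r) rZB rq r'm => {}r' rZB rq r'm; set m := size r in r'm *.
have [v0 walk_r'] := ZB_walk Z_walk rZB.
rewrite (sum_C1_d1coef a0 (fun a => sB a == e1) (rcons_path g)).
rewrite (sum_C1_d1coef a0 (fun a => tB a == e1) (cons_path^~ g)) /= r'm.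
apply: sum_nat_shift => [||i im]; rewrite !replace_eq //=.
- rewrite take0 -catA /= -(drop_nth a0) ?r'm // drop0 -[X in g.2 ++ X]cats0.
  by rewrite BB_neq_infix_ZB ?andbF.
- rewrite drop_oversize ?r'm // cats0 -cat1s catA cats1 -take_nth ?r'm //.
  by rewrite take_oversize ?r'm // -[r' ++ _]cat0s BB_neq_infix_ZB ?andbF.
have ir' : (i.+1 < size r')%N by rewrite r'm.
have walk_split : walk sB tB v0 (take i r' ++ [:: nth a0 r' i; nth a0 r' i.+1] ++ drop i.+2 r').
  by rewrite /= -(drop_nth a0 ir') -(drop_nth a0 (ltnW ir')) cat_take_drop.
rewrite (take_nth a0) ?(ltnW ir') // (drop_nth a0 ir') -cats1 -!catA /=.
by rewrite (d0_terms_adjacent g1 qB walk_split).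
Qed.

Local Notation special_path := (special_path k s t Z N).
Local Notation special_pairs := (special_pairs s t Z N).
Local Notation spp_span := (spp_span k s t Z N).
Local Notation basis_vec := (basis_vec k s t Z N).

Lemma special_path_facts p : special_path p ->
  [/\ p \in BA, glued p.1, glued (pend t p), p.1 != pend t p & p.2 != [::]].
Proof.
case: p => v l /and3P[vlA ends _]; rewrite /= in ends *.
have [gv gend vend] : [/\ glued v, glued (pend t (v, l)) & v != pend t (v, l)].
  by case/orP: ends => /andP[/eqP-> /eqP->]; rewrite /glued !eqxx ?orbT.
by split=> //; apply: contra vend => /eqP->.
Qed.

Lemma mem_special_pairs a p : ((a, p) \in special_pairs) = special_pair s t Z N a p.
Proof.
rewrite mem_filter /=; apply/andP/idP => [[] // | ap]; split=> //.
by apply: allpairs_f; rewrite ?mem_enum //; case/and4P: ap.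
Qed.

Lemma special_pair_rcons p a : special_path p -> sB a == e1 ->
  (a, rcons_path (star p) a) \in C1 -> (a, (p.1, p.2 ++ [:: a])) \in special_pairs.
Proof.
case: p => v l sp sa; have [+ _ gend vend lnil] := special_path_facts sp.
rewrite mem_C1 mem_special_pairs mem_BA mem_BB /= => /and3P[_ walk_l _].
move=> /andP[/and4P[_ size_la _ ZB_la] par].
have sa_end : s a = pend t (v, l).
  apply/eqP; apply: contraT => ne; move: lnil ZB_la ne gend.
  case/lastP: l {sp walk_l size_la par vend} => [|l' c] // _ /hasPn ZB_la.
  rewrite /pend /= map_rcons last_rcons => ne gc.
  have /ZB_la : [:: c; a] \in ZB.
    by apply: ZB_glued_pair; [| rewrite -glue_eq_e1 | rewrite eq_sym].
  by rewrite -cats1 -catA infix_infix.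
rewrite /special_pair -glue_eq_e1 sa mem_BA size_la walk_cat walk_l /= sa_end eqxx.
by rewrite avoids_ZB //= par /parallel sa_end eq_sym (negbTE vend).
Qed.

Lemma special_pair_cons p a : special_path p -> tB a == e1 ->
  (a, cons_path a (star p)) \in C1 -> (a, (s a, a :: p.2)) \in special_pairs.
Proof.
case: p => v l sp ta; have [+ gv _ vend lnil] := special_path_facts sp.
rewrite mem_C1 mem_special_pairs mem_BA mem_BB /= => /and3P[_ walk_l _].
move=> /andP[/and4P[_ size_al _ ZB_al] par].
have ta_v : t a = v.
  move: lnil walk_l ZB_al gv; case: l {sp size_al par vend} => [|c l] // _ walk_l /hasPn ZB_al gv.
  apply/eqP; apply: contraT => ne; rewrite -(walk_head walk_l) in gv ne.
  have /ZB_al : [:: a; c] \in ZB.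
    by apply: ZB_glued_pair; [rewrite -glue_eq_e1 | |].
  by rewrite -[a :: c :: l]/([:: a; c] ++ l) prefix_infix.
rewrite /special_pair -(glue_eq_e1 (t a)) ta orbT mem_BA size_al /= eqxx ta_v walk_l.
by rewrite avoids_ZB //= par /parallel /pend /= ta_v eqxx /= (negbTE vend).
Qed.

Lemma delta0B_special_support p j : special_path p -> delta0B (star p) 0 j != 0 ->
  exists2 p', ((c1 j).1, p') \in special_pairs & star p' = (c1 j).2.
Proof.
move=> sp /delta0B_support; have := mem_tnth j (in_tuple C1).
case: (c1 j) => a w aw; rewrite /d0_rcons /d0_cons /=.
case/orP => /andP[a_end /eqP wE]; subst w.
  by exists (p.1, p.2 ++ [:: a]) => //; apply: special_pair_rcons.
by exists (s a, a :: p.2) => //; apply: special_pair_cons.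
Qed.

Lemma special_path_word_inj p p' : special_path p -> special_path p' -> p.2 = p'.2 -> p = p'.
Proof.
case: p p' => v l [v' l'] sp sp' /= ll'; subst l'.
have [vlA _ _ _ lnil] := special_path_facts sp; have [v'lA _ _ _ _] := special_path_facts sp'.
move: vlA v'lA; rewrite !mem_BA; case: l {sp sp'} lnil => [|a l] // _.
by move=> /and3P[_ /walk_head <- _] /and3P[_ /walk_head <- _].
Qed.

Lemma special_path_rcons_cons p p' a : special_path p -> special_path p' ->
  p.2 ++ [:: a] = a :: p'.2 -> p.2 = p'.2.
Proof.
case: p p' => v l [v' l'] sp sp' /=.
have [+ _ _ vend _] := special_path_facts sp; have [+ _ _ _ _] := special_path_facts sp'.
rewrite !mem_BA => /and3P[_ walk_l' _] /and3P[_ walk_l _] /=.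
case: l walk_l vend {sp sp'} => [|b [|c u]] walk_l vend /=; first by case=> <-.
  by case=> -> <-.
case=> ab uE; subst b.
move: walk_l'; rewrite -uE -cat_cons walk_cat => /andP[_ /= /andP[/eqP sa _]].
by move: vend; rewrite /pend /= -(walk_head walk_l) sa eqxx.
Qed.

Lemma d0_word g x : d0_rcons g x || d0_cons g x ->
  x.2.2 = g.2 ++ [:: x.1] \/ x.2.2 = x.1 :: g.2.
Proof. by case/orP => /andP[_ /eqP->]; [left | right]. Qed.

Lemma delta0B_special_disjoint p p' j : special_path p -> special_path p' -> p != p' ->
  delta0B (star p) 0 j != 0 -> delta0B (star p') 0 j = 0.
Proof.
move=> sp sp' pp' /delta0B_support /d0_word wp; rewrite delta0B_entry.
suff /norP[/negbTE-> /negbTE->] : ~~ (d0_rcons (star p') (c1 j) || d0_cons (star p') (c1 j)).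
  by rewrite subrr.
apply: contra pp' => /d0_word wp'; apply/eqP/(special_path_word_inj sp sp').
move: wp wp'; case: (c1 j) => a [v w] /= [] wE [] w'E; rewrite wE in w'E.
- by move: w'E; rewrite !cats1 => /rcons_inj[].
- exact: special_path_rcons_cons w'E.
- by rewrite (special_path_rcons_cons sp' sp (esym w'E)).
- by case: w'E.
Qed.

Lemma basis_vec_tnth j : basis_vec (c1 j) = delta_mx 0 j.
Proof.
have C1_inj : injective (tnth (in_tuple C1)) by apply/tuple_uniqP/C1_uniq.
by apply/rowP => j'; rewrite !mxE (inj_eq C1_inj).
Qed.

Lemma basis_vec_special_pair_sub x :
  x \in special_pairs -> (basis_vec (x.1, star x.2) <= spp_span)%MS.
Proof.
move=> x_spp; have /tnthP[i ->] : x \in in_tuple special_pairs := x_spp.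
rewrite (_ : basis_vec _ = row i spp_span) ?row_sub //.
by apply/rowP => j; rewrite !mxE.
Qed.

Lemma delta0B_special_sub p : special_path p -> (delta0B (star p) <= spp_span)%MS.
Proof.
move=> sp; rewrite [delta0B _]row_sum_delta; apply/summx_sub => j _.
have [->|/(delta0B_special_support sp)[p' pair_p' p'j]] := eqVneq (delta0B (star p) 0 j) 0.
  by rewrite scale0r sub0mx.
apply/scalemx_sub; rewrite -basis_vec_tnth [c1 j]surjective_pairing -p'j.
exact: basis_vec_special_pair_sub pair_p'.
Qed.

Lemma size_special_paths_le_kspp
    (Z_walk : forall r, r \in Z -> exists v, walk s t v r) S :
  uniq S -> all special_path S -> (size S <= kspp k s t Z N)%N.
Proof.
move=> S_uniq /allP S_special; pose p i := tnth (in_tuple S) i.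
have p_special i : special_path (p i) by apply/S_special/mem_tnth.
have p_inj : injective p by apply/tuple_uniqP.
pose D := \matrix_(i < size S) delta0B (star (p i)).
have D_entry i j : D i j = delta0B (star (p i)) 0 j by rewrite mxE.
have D_free : row_free D.
  apply: row_free_disjoint_supports => [i | i i' j ii'].
    by rewrite rowK; case/and3P: (p_special i).
  rewrite !D_entry; apply: delta0B_special_disjoint => //.
  by apply: contra ii' => /eqP /p_inj ->.
have D_sub : (D <= Zspp k s t Z N)%MS.
  apply/row_subP => i; rewrite rowK sub_capmx delta0B_special_sub //=.
  apply/sub_kermxP/delta0B_mul_delta1B => //=; apply/eqP; rewrite glue_eq_e1.
  by have [] := special_path_facts (p_special i).
by rewrite -(eqP D_free) mxrankS.
Qed.

Lemma kspp_le_size_special_pairs : (kspp k s t Z N <= size special_pairs)%N.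
Proof. exact: leq_trans (mxrankS (capmxSl _ _)) (rank_leq_row _). Qed.

End Gluing.

Theorem corollary3p23 (k : fieldType) (n : nat) (E : finType) (s t : E -> 'I_n.+2)
    (Z : seq (seq E)) (N : nat)
    (* Z_A: paths of length >= 2 of Q_A *)
    (HZ : forall r, r \in Z -> (2 <= size r)%N /\ exists v, walk s t v r)
    (* Z_A is a minimal set of generators *)
    (Hmin : uniq Z /\ forall r r', r \in Z -> r' \in Z -> infix r r' -> r = r')
    (* I_A admissible: every path of length >= N lies in I_A *)
    (Hadm : forall v l, walk s t v l -> (N <= size l)%N -> exists2 r, r \in Z & infix r l)
    (* e_1 and e_n are non-isolated *)
    (H1 : exists a, (s a == e1 n) || (t a == e1 n))
    (Hn : exists a, (s a == en n) || (t a == en n)) :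
  (sp k s t Z N <= kspp k s t Z N)%N /\ (sp k s t Z N <= size (special_pairs s t Z N))%N.
Proof.
have Z_walk r : r \in Z -> exists v, walk s t v r by case/HZ.
have sp_le_kspp : (sp k s t Z N <= kspp k s t Z N)%N.
  rewrite /sp -size_filter; apply: size_special_paths_le_kspp => //.
    exact/filter_uniq/BA_uniq.
  exact: filter_all.
by split=> //; apply: leq_trans sp_le_kspp (kspp_le_size_special_pairs k s t Z N).
Qed.
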